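(* Let $\rho$ be a positive integer and $v$ an integer with $v \ge 9\rho + 31$. Then \[ \beta(\rho,v,4) \le \frac{\rho v}{3} + 5\rho^2 - \frac{16\rho}{3}. \]
   Context: For integers $v \ge k \ge 2$, a $(v,k)$-packing is a pair $(X,\mathcal{B})$ where $X$ is a set of $v$ points and $\mathcal{B}$ is a set of $k$-subsets of $X$ (blocks) such that every pair of distinct points lies in at most one block. A partial parallel class (PPC) is a set of pairwise disjoint blocks; its size is the number of blocks. A PPC of size $\rho$ is maximum if the packing has no PPC of size $\rho+1$. $\beta(\rho,v,k)$ denotes the maximum number of blocks in a $(v,k)$-packing in which the maximum PPC has size $\rho$. *)

From mathcomp Require Import all_boot all_order all_algebra.
Set Implicit Arguments. Unset Strict Implicit. Unset Printing Implicit Defensive.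

Definition is_packing (v k : nat) (B : {set {set 'I_v}}) : bool :=
  [forall b in B, #|b| == k] &&
  [forall x : 'I_v, forall y : 'I_v,
     (x != y) ==> (#|[set b in B | (x \in b) && (y \in b)]| <= 1)].

Definition is_ppc (v : nat) (B P : {set {set 'I_v}}) : bool :=
  (P \subset B) &&
  [forall b1 in P, forall b2 in P, (b1 != b2) ==> [disjoint b1 & b2]].

Definition max_ppc_size (v : nat) (B : {set {set 'I_v}}) : nat :=
  \max_(P : {set {set 'I_v}} | is_ppc B P) #|P|.

(* beta(rho, v, k): max number of blocks in a (v,k)-packing whose maximum
   PPC has size rho (0 if there is no such packing). *)
Definition beta (rho v k : nat) : nat :=
  \max_(B : {set {set 'I_v}} | is_packing k B && (max_ppc_size B == rho)) #|B|.

From mathcomp Require Import all_boot all_order all_algebra.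
From mathcomp Require Import zify lra.
Set Implicit Arguments. Unset Strict Implicit. Unset Printing Implicit Defensive.

(* Fix a maximum partial parallel class P of size rho and let U be the 4 rho
   points it covers.  Maximality yields an exchange principle: pairwise disjoint
   blocks whose traces on U lie inside s members of P number at most s.  Hence
   every block meets U, and a block outside P meets U either in a single point
   (a pendant at that point) or in at least two points (a crossing block).
   Pendants at x are disjoint off x, so there are at most (v - 4 rho)/3 of them,
   and by exchange a member of P containing a point with many pendants has no
   pendants at its other points.  A crossing block covers ordered pairs of
   points from distinct members, each pair at most once, so crossing blocks are
   bounded by 16 per ordered pair of members plus a term counting the pairs
   {y, z} that are exactly the trace of a block; exchange again cuts this term
   down next to points with many pendants.  Adding up over members and ordered
   pairs of members gives 6 |B| <= 2 rho v + 30 rho^2 - 32 rho. *)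

Lemma sum_pred_card (T : finType) (A : {set T}) (p : pred T) :
  \sum_(i in A) (p i : nat) = #|[set i in A | p i]|.
Proof.
rewrite -sum1_card big_mkcond [RHS]big_mkcond /=; apply: eq_bigr => i _.
by rewrite !inE; case: (i \in A); case: (p i).
Qed.

Lemma sum_ordered_pairs (T : finType) (A S : {set T}) :
  \sum_(y in A) \sum_(z in A) ((y \in S) && (z \in S) && (y != z) : nat)
  = #|S :&: A| * (#|S :&: A| - 1).
Proof.
transitivity (\sum_(y in A) ((y \in S) * (#|S :&: A| - 1))).
  apply: eq_bigr => y yA; case yS: (y \in S) => /=; last by rewrite mul0n big1.
  rewrite mul1n sum_pred_card (cardsD1 y (S :&: A)) inE yS yA add1n subn1 /=.
  apply: eq_card => z; rewrite !inE [y == z]eq_sym.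
  by case: (z \in A); case: (z \in S); rewrite /= ?andbT ?andbF.
by rewrite -big_distrl /= sum_pred_card; congr (_ * _); apply: eq_card => y; rewrite !inE andbC.
Qed.

Lemma disjoint_setD1r (T : finType) (A C : {set T}) y :
  y \notin A -> [disjoint A & C :\ y] = [disjoint A & C].
Proof.
move=> yA; rewrite -!setI_eq0; congr (_ == _); apply/setP => z; rewrite !inE.
by case: (eqVneq z y) => [->|] //=; rewrite (negbTE yA).
Qed.

Lemma set2_sub_setU (T : finType) (A A' : {set T}) x y :
  x \in A -> y \in A' -> [set x; y] \subset A :|: A'.
Proof. by move=> xA yA'; rewrite subUset !sub1set !inE xA yA' orbT. Qed.

Lemma card_bigcup_le (I T : finType) (A : {set I}) (F : I -> {set T}) :
  #|\bigcup_(i in A) F i| <= \sum_(i in A) #|F i|.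
Proof.
apply: (big_rec2 (fun (S : {set T}) n => #|S| <= n)) => [|i S n _ leSn].
  by rewrite cards0.
by rewrite (leq_trans (leq_card_setU _ _)) ?leq_add2l.
Qed.

Lemma leq_sum_dominant (T : finType) (A : {set T}) (N : T -> nat) c K :
  (forall y z, y \in A -> z \in A -> y != z -> 0 < N y -> N z <= c) ->
  {in A, forall y, N y <= K} ->
  \sum_(y in A) N y <= maxn (c * #|A|) K.
Proof.
move=> small leK.
case: (pickP [pred y in A | c < N y]) => [y0 /andP [y0A Ny0] | no_large].
  rewrite (bigD1 y0) //= big1 ?addn0; first by rewrite leq_max leK ?orbT.
  move=> y /andP [yA yy0]; apply/eqP; rewrite -leqn0 leqNgt; apply/negP => Ny.
  by have := small y y0 yA y0A yy0 Ny; rewrite leqNgt Ny0.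
rewrite leq_max -sum1_card big_distrr /= muln1 leq_sum // => y yA.
by have := no_large y; rewrite /= yA => /negbT; rewrite -leqNgt.
Qed.

Lemma sum_offdiag_sym (T : finType) (A : {set T}) (F : T -> nat) :
  \sum_(a in A) \sum_(a' in A | a' != a) (F a + F a')
  = 2 * (#|A| - 1) * \sum_(a in A) F a.
Proof.
set S := \sum_(a in A) F a.
have row a : a \in A ->
    \sum_(a' in A | a' != a) (F a + F a') + F a + F a = #|A| * F a + S.
  move=> aA; have e : \sum_(a' in A) (F a + F a') = #|A| * F a + S.
    by rewrite big_split sum_nat_const.
  rewrite (bigD1 a) //= in e; lia.
have : \sum_(a in A) (\sum_(a' in A | a' != a) (F a + F a') + F a + F a)
       = \sum_(a in A) (#|A| * F a + S) by apply: eq_bigr.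
rewrite !big_split /= sum_nat_const -big_distrr -/S /=.
nia.
Qed.

Lemma is_ppcP v (B Q : {set {set 'I_v}}) :
  reflect (Q \subset B /\ {in Q &, forall C D : {set 'I_v}, C != D -> [disjoint C & D]})
          (is_ppc B Q).
Proof.
apply: (iffP andP) => -[QB disjQ]; split=> //.
  move=> C D CQ DQ; move/forall_inP: disjQ => /(_ C CQ) /forall_inP /(_ D DQ).
  exact/implyP.
by apply/forall_inP => C CQ; apply/forall_inP => D DQ; apply/implyP; apply: disjQ.
Qed.

Lemma is_ppc_set1 v (B : {set {set 'I_v}}) C : C \in B -> is_ppc B [set C].
Proof.
move=> CB; apply/is_ppcP; rewrite sub1set; split=> // C1 C2.
by rewrite !inE => /eqP -> /eqP ->; rewrite eqxx.
Qed.

Lemma is_ppc_setU1 v (B Q : {set {set 'I_v}}) C : C \in B -> is_ppc B Q ->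
  {in Q, forall D : {set 'I_v}, [disjoint C & D]} -> is_ppc B (C |: Q).
Proof.
move=> CB /is_ppcP [QB disjQ] disjC; apply/is_ppcP; split.
  by rewrite subUset sub1set CB.
move=> C1 C2; rewrite !inE => /predU1P [-> | C1Q] /predU1P [-> | C2Q];
  rewrite ?eqxx // => neqC12.
- exact: disjC.
- by rewrite disjoint_sym disjC.
- exact: disjQ.
Qed.

Section Packing.

Variables (v k : nat) (B : {set {set 'I_v}}).
Hypothesis packB : is_packing k B.

Lemma packing_block_card C : C \in B -> #|C| = k.
Proof. by case/andP: packB => /forall_inP H _ /H /eqP. Qed.

Lemma packing_block_cardD1 C x : C \in B -> x \in C -> #|C :\ x| = k - 1.
Proof.
move=> CB xC; have := cardsD1 x C; rewrite xC (packing_block_card CB) add1n.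
by move=> ->; rewrite subn1.
Qed.

Lemma packing_pair_le1 x y :
  x != y -> #|[set C in B | (x \in C) && (y \in C)]| <= 1.
Proof. by case/andP: packB => _ /forallP /(_ x) /forallP /(_ y) /implyP. Qed.

Lemma packing_pair_uniq x y C D : x != y -> C \in B -> D \in B ->
  x \in C -> y \in C -> x \in D -> y \in D -> C = D.
Proof.
move=> xy CB DB xC yC xD yD.
by apply: (card_le1_eqP (packing_pair_le1 xy)); rewrite inE ?CB ?DB /= ?xC ?yC ?xD ?yD.
Qed.

Lemma pencil_sum_meet x (A : {set 'I_v}) (F : {set {set 'I_v}}) :
  x \notin A -> F \subset B -> {in F, forall D : {set 'I_v}, x \in D} ->
  \sum_(D in F) #|D :&: A| <= #|A|.
Proof.
move=> xA FB Fx.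
have cardI D : #|D :&: A| = \sum_(a in A) (a \in D : nat).
  by rewrite sum_pred_card; apply: eq_card => a; rewrite !inE andbC.
under eq_bigr => D _ do rewrite cardI.
rewrite exchange_big /= -sum1_card leq_sum // => a aA.
have xa : x != a by apply: contraNneq xA => ->.
rewrite sum_pred_card (leq_trans _ (packing_pair_le1 xa)) // subset_leq_card //.
by apply/subsetP => D; rewrite !inE => /andP [DF ->]; rewrite (subsetP FB) ?Fx.
Qed.

Lemma pencil_avoids x (A : {set 'I_v}) (F : {set {set 'I_v}}) :
  x \notin A -> F \subset B -> {in F, forall D : {set 'I_v}, x \in D} ->
  #|A| < #|F| -> exists2 D, D \in F & [disjoint D & A].
Proof.
move=> xA FB Fx ltAF.
case: (pickP [pred D in F | [disjoint D & A]]) => [D /andP [] | meetA]; first by exists D.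
suff : #|F| <= \sum_(D in F) #|D :&: A| by have := pencil_sum_meet xA FB Fx; lia.
rewrite -sum1_card leq_sum // => D DF.
by have := meetA D; rewrite /= DF card_gt0 setI_eq0 => /negbT.
Qed.

End Packing.

Section MaximumPPC.

Variables (v k rho : nat) (B P : {set {set 'I_v}}).
Hypotheses (packB : is_packing k B) (k_gt1 : 1 < k).
Hypotheses (ppcP : is_ppc B P) (cardP : #|P| = rho).
Hypothesis maxP : forall Q, is_ppc B Q -> #|Q| <= rho.

Implicit Types (b C D E : {set 'I_v}) (S Q : {set {set 'I_v}}).

Local Notation U := (cover P).

Lemma ppc_subset : P \subset B.
Proof. by case/is_ppcP: ppcP. Qed.

Lemma ppc_member_card b : b \in P -> #|b| = k.
Proof. by move=> bP; rewrite (packing_block_card packB) // (subsetP ppc_subset). Qed.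

Lemma ppc_disjoint : {in P &, forall b b' : {set 'I_v}, b != b' -> [disjoint b & b']}.
Proof. by case/is_ppcP: ppcP. Qed.

Lemma ppc_trivIset : trivIset P.
Proof. exact/trivIsetP/ppc_disjoint. Qed.

Lemma sum_over_cover (F : 'I_v -> nat) :
  \sum_(x in U) F x = \sum_(b in P) \sum_(x in b) F x.
Proof. exact: big_trivIset ppc_trivIset. Qed.

Lemma mem_cover_ppc b x : b \in P -> x \in b -> x \in U.
Proof. by move=> bP xb; apply/bigcupP; exists b. Qed.

Lemma ppc_members_neq b b' x y : b \in P -> b' \in P -> b != b' ->
  x \in b -> y \in b' -> x != y.
Proof.
move=> bP b'P bb' xb yb'; apply: contraTneq yb' => <-.
by rewrite (disjointFr (ppc_disjoint bP b'P bb') xb).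
Qed.

Lemma card_outside_cover : #|~: U| = v - k * rho.
Proof.
have := (leq_card_cover P).2; rewrite ppc_trivIset => /eqP coverE.
have <- : \sum_(b in P) k = k * rho by rewrite sum_nat_const cardP mulnC.
rewrite -(eq_bigr _ ppc_member_card) -coverE.
by apply: (canRL (addKn #|U|)); rewrite cardsC card_ord.
Qed.

Lemma mem_trace C z : z \in U -> (z \in C) = (z \in C :&: U).
Proof. by move=> zU; rewrite inE zU andbT. Qed.

Lemma disjoint_block_neq C D : C \in B -> [disjoint C & D] -> C != D.
Proof.
move=> CB; apply: contraTneq => <-; rewrite -setI_eq0 setIid -cards_eq0.
by rewrite (packing_block_card packB CB) -lt0n ltnW.
Qed.

(* Replacing the members of S by the blocks of Q yields another partial
   parallel class. *)
Lemma ppc_exchange S Q : S \subset P -> is_ppc B Q ->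
  {in Q, forall C : {set 'I_v}, C :&: U \subset cover S} -> #|Q| <= #|S|.
Proof.
move=> sSP ppcQ QS; have [QB disjQ] := is_ppcP _ _ ppcQ.
have disjPQ p C : p \in P :\: S -> C \in Q -> [disjoint p & C].
  rewrite inE => /andP [pS pP] CQ; rewrite disjoints_subset; apply/subsetP => x xp.
  rewrite inE; apply/negP => xC.
  have /bigcupP [b bS xb] : x \in cover S.
    by apply: (subsetP (QS C CQ)); rewrite -mem_trace // (mem_cover_ppc pP).
  have pb : p != b by apply: contraNneq pS => ->.
  by rewrite (disjointFr (ppc_disjoint pP (subsetP sSP b bS) pb) xp) in xb.
have ppcPQ : is_ppc B ((P :\: S) :|: Q).
  apply/is_ppcP; split; first by rewrite subUset QB (subset_trans (subsetDl P S) ppc_subset).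
  move=> C D; rewrite !in_setU => /orP [CPS | CQ] /orP [DPS | DQ] neqCD.
  - by move: CPS DPS; rewrite !inE => /andP [_ CP] /andP [_ DP]; apply: ppc_disjoint.
  - exact: disjPQ.
  - by rewrite disjoint_sym disjPQ.
  - exact: disjQ.
have disjPSQ : [disjoint P :\: S & Q].
  rewrite disjoints_subset; apply/subsetP => C CPS; rewrite inE; apply/negP => CQ.
  by have /disjoint_block_neq := disjPQ C C CPS CQ; rewrite eqxx (subsetP QB) // => /(_ isT).
have := maxP ppcPQ; rewrite cardsU (disjoint_setI0 disjPSQ) cards0 subn0 cardsDS // cardP.
have : #|S| <= rho by rewrite -cardP subset_leq_card.
lia.
Qed.

Lemma block_meets_cover C : C \in B -> 0 < #|C :&: U|.
Proof.
move=> CB; rewrite card_gt0 setI_eq0; apply/negP => disjCU.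
suff : #|[set C]| <= #|@set0 {set 'I_v}| by rewrite cards1 cards0.
apply: ppc_exchange (sub0set _) (is_ppc_set1 CB) _ => C'; rewrite inE => /eqP ->.
by rewrite (disjoint_setI0 disjCU) sub0set.
Qed.

Lemma no_disjoint_pair_over_member b C D : b \in P -> C \in B -> D \in B ->
  [disjoint C & D] -> C :&: U \subset b -> D :&: U \subset b -> False.
Proof.
move=> bP CB DB disjCD CUb DUb.
suff : #|C |: [set D]| <= #|[set b]|.
  by rewrite cardsU1 !cards1 inE (disjoint_block_neq CB disjCD).
apply: ppc_exchange; first by rewrite sub1set.
  apply: is_ppc_setU1 (is_ppc_set1 DB) _ => // D'.
  by rewrite inE => /eqP ->.
by move=> C'; rewrite cover1 !inE => /predU1P [-> | /eqP ->].
Qed.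

Lemma no_disjoint_triple_over_members b b' C D E :
  b \in P -> b' \in P -> b != b' -> C \in B -> D \in B -> E \in B ->
  [disjoint C & D] -> [disjoint C & E] -> [disjoint D & E] ->
  C :&: U \subset b :|: b' -> D :&: U \subset b :|: b' -> E :&: U \subset b :|: b' ->
  False.
Proof.
move=> bP b'P bb' CB DB EB dCD dCE dDE CU DU EU.
suff : #|C |: (D |: [set E])| <= #|[set b; b']|.
  rewrite cards2 bb' !cardsU1 cards1 !inE negb_or (disjoint_block_neq CB dCD).
  by rewrite (disjoint_block_neq CB dCE) (disjoint_block_neq DB dDE).
apply: ppc_exchange.
- by rewrite subUset !sub1set bP b'P.
- apply: is_ppc_setU1 => //; last by move=> C'; rewrite !inE => /predU1P [-> | /eqP ->].
  by apply: is_ppc_setU1 (is_ppc_set1 EB) _ => // C'; rewrite inE => /eqP ->.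
- have -> : cover [set b; b'] = b :|: b' by rewrite /cover bigcup_setU !big_set1.
  by move=> C'; rewrite !inE => /predU1P [-> | /predU1P [-> | /eqP ->]].
Qed.

Definition pendants x := [set C in B | C :&: U == [set x]].
Definition deg x := #|pendants x|.

Lemma pendantsP x C :
  reflect [/\ C \in B, x \in C & C :&: U = [set x]] (C \in pendants x).
Proof.
rewrite inE; apply: (iffP andP) => [[CB /eqP CU] | [CB _ ->]] //; split=> //.
by have := set11 x; rewrite -CU inE => /andP [].
Qed.

Lemma pendants_subset x : pendants x \subset B.
Proof. by apply/subsetP => C /pendantsP []. Qed.

Lemma pendants_pencil x : {in pendants x, forall C, x \in C}.
Proof. by move=> C /pendantsP []. Qed.

Lemma pendant_avoids x (A : {set 'I_v}) : x \notin A -> #|A| < deg x ->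
  exists2 D, D \in pendants x & [disjoint D & A].
Proof.
by move=> xA; apply: (pencil_avoids packB xA (pendants_subset x) (@pendants_pencil x)).
Qed.

Lemma deg_bound x : x \in U -> (k - 1) * deg x <= #|~: U|.
Proof.
move=> xU; rewrite mulnC -sum_nat_const.
have xU' : x \notin ~: U by rewrite inE xU.
apply: leq_trans (pencil_sum_meet packB xU' (pendants_subset x) (@pendants_pencil x)).
apply: eq_leq; apply: eq_bigr => C /pendantsP [CB _ CU].
have := cardsID U C; rewrite CU cards1 setDE (packing_block_card packB CB).
by move=> <-; rewrite addKn.
Qed.

Lemma deg_eq0_beside b x y : b \in P -> x \in b -> y \in b -> x != y ->
  k <= deg x -> deg y = 0.
Proof.
move=> bP xb yb xy kx; apply/eqP; rewrite cards_eq0; apply/set0Pn => -[C].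
move=> /pendantsP [CB yC CU].
have xC : x \notin C by rewrite (mem_trace _ (mem_cover_ppc bP xb)) CU inE.
have xCy : x \notin C :\ y by rewrite inE (negbTE xC) andbF.
have ltCy : #|C :\ y| < deg x.
  by rewrite (packing_block_cardD1 packB CB yC) (leq_trans _ kx) // ltn_subrL (ltnW k_gt1).
have [D /pendantsP [DB xD DU]] := pendant_avoids xCy ltCy.
have yD : y \notin D by rewrite (mem_trace _ (mem_cover_ppc bP yb)) DU inE eq_sym.
rewrite disjoint_setD1r // disjoint_sym => disjCD.
by apply: (no_disjoint_pair_over_member bP CB DB disjCD); rewrite ?CU ?DU sub1set.
Qed.

Definition pendant_weight b := \sum_(x in b) deg x.
(* A pendant at a heavy point can be chosen disjoint from any two blocks. *)
Definition heavy b := [exists x in b, 2 * k < deg x].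

Lemma pendant_weight_le b : b \in P -> pendant_weight b <=
  maxn ((k - 1) * k) (if heavy b then #|~: U| %/ (k - 1) else 2 * k).
Proof.
move=> bP; rewrite -{2}(ppc_member_card bP); apply: leq_sum_dominant.
  move=> y z yb zb yz dy; rewrite leqNgt; apply/negP => kz.
  have kz' : k <= deg z by rewrite -(subnK (ltnW k_gt1)) addn1.
  have zy : z != y by rewrite eq_sym.
  by rewrite (deg_eq0_beside bP zb yb zy kz') in dy.
move=> y yb; case: ifP => [_ | /negbT].
  by rewrite leq_divRL ?subn_gt0 // mulnC deg_bound ?(mem_cover_ppc bP yb).
by rewrite negb_exists => /forallP /(_ y); rewrite yb -leqNgt.
Qed.

Definition linked x y := [exists C in B, C :&: U == [set x; y]].
Definition link_block x y := odflt set0 [pick C in B | C :&: U == [set x; y]].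
Definition links b x := #|[set y in b | linked x y]|.
Definition links_between b b' := \sum_(x in b) links b' x.

Lemma link_blockP x y : linked x y ->
  link_block x y \in B /\ link_block x y :&: U = [set x; y].
Proof.
rewrite /link_block; case: pickP => [C /andP [CB /eqP CU] | none] //.
by case/exists_inP => C CB CU; move: (none C); rewrite /= CB CU.
Qed.

Lemma linkedC x y : linked x y = linked y x.
Proof. by rewrite /linked setUC. Qed.

Lemma no_disjoint_pair_beside_heavy b b' x C D :
  b \in P -> b' \in P -> b != b' -> x \in b -> 2 * k < deg x ->
  C \in B -> D \in B -> [disjoint C & D] -> x \notin C -> x \notin D ->
  C :&: U \subset b :|: b' -> D :&: U \subset b :|: b' -> False.
Proof.
move=> bP b'P bb' xb heavy_x CB DB dCD xC xD CU DU.
have xCD : x \notin C :|: D by rewrite inE negb_or xC xD.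
have ltCD : #|C :|: D| < deg x.
  apply: leq_ltn_trans heavy_x; apply: leq_trans (leq_card_setU C D) _.
  by rewrite !(packing_block_card packB) // addnn -mul2n.
have [E /pendantsP [EB _ EU] dECD] := pendant_avoids xCD ltCD.
have dCE : [disjoint C & E] by rewrite disjoint_sym (disjointWr (subsetUl C D) dECD).
have dDE : [disjoint D & E] by rewrite disjoint_sym (disjointWr (subsetUr C D) dECD).
apply: (no_disjoint_triple_over_members bP b'P bb' CB DB EB) => //.
by rewrite EU sub1set inE xb.
Qed.

Lemma link_avoids b b' y (A : {set 'I_v}) : b \in P -> b' \in P -> b != b' ->
  y \in b -> y \notin A -> #|A| < links b' y ->
  exists2 z, (z \in b') && linked y z & [disjoint link_block y z & A].
Proof.
move=> bP b'P bb' yb yA ltA.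
pose F := link_block y @: [set z in b' | linked y z].
have FB : F \subset B.
  by apply/subsetP => D /imsetP [z /setIdP [_ /link_blockP [DB _]] ->].
have Fy : {in F, forall D, y \in D}.
  move=> D /imsetP [z /setIdP [_ /link_blockP [_ DU]] ->].
  by rewrite (mem_trace _ (mem_cover_ppc bP yb)) DU !inE eqxx.
have cardF : #|F| = links b' y.
  apply: card_in_imset => z1 z2 /setIdP [z1b' /link_blockP [_ U1]].
  move=> /setIdP [_ /link_blockP [_ U2]] eqD.
  have : z1 \in [set y; z2] by rewrite -U2 -eqD U1 !inE eqxx orbT.
  by rewrite !inE eq_sym (negbTE (ppc_members_neq bP b'P bb' yb z1b')) => /eqP.
rewrite -cardF in ltA.
have [D /imsetP [z zb'y ->] dDA] := pencil_avoids packB yA FB Fy ltA.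
by exists z; first by rewrite inE in zb'y.
Qed.

Lemma links_beside_heavy b b' x y1 y2 : b \in P -> b' \in P -> b != b' ->
  x \in b -> 2 * k < deg x -> y1 \in b -> y2 \in b -> y1 != y2 -> y1 != x -> y2 != x ->
  0 < links b' y1 -> links b' y2 < k.
Proof.
move=> bP b'P bb' xb heavy_x y1b y2b y12 y1x y2x.
rewrite card_gt0 ltnNge => /set0Pn [z]; rewrite inE => /andP [zb' linked_z].
apply/negP => k_links.
have [CB CU] := link_blockP linked_z; set C := link_block y1 z in CB CU.
have inU := mem_cover_ppc bP.
have y2C : y2 \notin C :\ y1.
  rewrite in_setD1 (mem_trace C (inU _ y2b)) CU !inE eq_sym (negbTE y12) /=.
  exact: ppc_members_neq bP b'P bb' y2b zb'.
have ltC : #|C :\ y1| < links b' y2.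
  have y1C : y1 \in C by rewrite (mem_trace C (inU _ y1b)) CU !inE eqxx.
  rewrite (packing_block_cardD1 packB CB y1C) (leq_trans _ k_links) //.
  by rewrite ltn_subrL (ltnW k_gt1).
have [z' /andP [z'b' linked_z'] dDC] := link_avoids bP b'P bb' y2b y2C ltC.
have [DB DU] := link_blockP linked_z'; set D := link_block y2 z' in DB DU dDC.
have y1D : y1 \notin D.
  rewrite (mem_trace D (inU _ y1b)) DU !inE negb_or y12.
  exact: ppc_members_neq bP b'P bb' y1b z'b'.
apply: (no_disjoint_pair_beside_heavy bP b'P bb' xb heavy_x CB DB).
- by rewrite disjoint_sym -(disjoint_setD1r _ y1D).
- rewrite (mem_trace C (inU _ xb)) CU !inE negb_or eq_sym y1x.
  exact: ppc_members_neq bP b'P bb' xb zb'.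
- rewrite (mem_trace D (inU _ xb)) DU !inE negb_or eq_sym y2x.
  exact: ppc_members_neq bP b'P bb' xb z'b'.
- by rewrite CU set2_sub_setU.
- by rewrite DU set2_sub_setU.
Qed.

Lemma link_between_heavy b b' x x' y z : b \in P -> b' \in P -> b != b' ->
  x \in b -> x' \in b' -> 2 * k < deg x -> 2 * k < deg x' ->
  y \in b -> z \in b' -> linked y z -> y != x -> z = x'.
Proof.
move=> bP b'P bb' xb x'b' heavy_x heavy_x' yb zb' linked_yz yx.
case: (eqVneq z x') => // zx'; exfalso.
have [CB CU] := link_blockP linked_yz; set C := link_block y z in CB CU.
have inU := mem_cover_ppc bP; have inU' := mem_cover_ppc b'P.
have b'b : b' != b by rewrite eq_sym.
have x'C : x' \notin C.
  rewrite (mem_trace C (inU' _ x'b')) CU !inE negb_or [x' == z]eq_sym zx' andbT.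
  exact: ppc_members_neq b'P bP b'b x'b' yb.
have ltC : #|C| < deg x'.
  by rewrite (packing_block_card packB CB) (leq_ltn_trans _ heavy_x') ?leq_pmull.
have [D /pendantsP [DB _ DU] dDC] := pendant_avoids x'C ltC.
apply: (no_disjoint_pair_beside_heavy bP b'P bb' xb heavy_x CB DB).
- by rewrite disjoint_sym.
- rewrite (mem_trace C (inU _ xb)) CU !inE negb_or eq_sym yx.
  exact: ppc_members_neq bP b'P bb' xb zb'.
- by rewrite (mem_trace D (inU _ xb)) DU !inE (ppc_members_neq bP b'P bb' xb x'b').
- by rewrite CU set2_sub_setU.
- by rewrite DU sub1set inE x'b' orbT.
Qed.

Lemma links_le b x : b \in P -> links b x <= k.
Proof. by move=> bP; rewrite -(ppc_member_card bP) subset_leq_card // setIdE subsetIl. Qed.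

Lemma links_betweenC b b' : links_between b b' = links_between b' b.
Proof.
rewrite /links_between /links; under eq_bigr => x _ do rewrite -sum_pred_card.
under [RHS]eq_bigr => y _ do rewrite -sum_pred_card.
by rewrite exchange_big; apply: eq_bigr => y _; apply: eq_bigr => x _; rewrite linkedC.
Qed.

Lemma links_between_le b b' : b' \in P -> links_between b b' <= #|b| * k.
Proof. by move=> b'P; rewrite -sum_nat_const leq_sum // => x _; apply: links_le. Qed.

Lemma links_between_heavy_le b b' : b \in P -> b' \in P -> b != b' -> heavy b ->
  links_between b b' <= k + maxn ((k - 1) * (k - 1)) k.
Proof.
move=> bP b'P bb' /exists_inP [x xb heavy_x].
rewrite /links_between (big_setD1 _ xb) leq_add ?links_le //.
rewrite -{2}(packing_block_cardD1 packB (subsetP ppc_subset b bP) xb).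
apply: leq_sum_dominant => [y1 y2 | y _]; last exact: links_le.
rewrite !in_setD1 => /andP [y1x y1b] /andP [y2x y2b] y12 pos1.
rewrite subn1 -ltnS prednK ?(ltnW k_gt1) //.
exact: links_beside_heavy bP b'P bb' xb heavy_x y1b y2b y12 y1x y2x pos1.
Qed.

Lemma links_between_heavy2_le b b' : b \in P -> b' \in P -> b != b' ->
  heavy b -> heavy b' -> links_between b b' <= k + (k - 1).
Proof.
move=> bP b'P bb' /exists_inP [x xb heavy_x] /exists_inP [x' x'b' heavy_x'].
rewrite /links_between (big_setD1 _ xb) leq_add ?links_le //.
rewrite -(packing_block_cardD1 packB (subsetP ppc_subset b bP) xb).
rewrite -sum1_card leq_sum // => y; rewrite in_setD1 => /andP [yx yb].
rewrite -(cards1 x') subset_leq_card //; apply/subsetP => z; rewrite !inE => /andP [zb' yz].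
by rewrite (link_between_heavy bP b'P bb' xb x'b' heavy_x heavy_x' yb zb' yz yx).
Qed.

Definition pendant_blocks := [set C in B | #|C :&: U| == 1].
Definition crossing_blocks := [set C in B :\: P | 1 < #|C :&: U|].

Lemma card_blocks_le : #|B| <= rho + #|pendant_blocks| + #|crossing_blocks|.
Proof.
rewrite -cardP; apply: (@leq_trans #|P :|: pendant_blocks :|: crossing_blocks|).
  apply/subset_leq_card/subsetP => C CB; rewrite !inE CB /=.
  case: (boolP (C \in P)) => //= CP; have := block_meets_cover CB.
  by case: #|C :&: U| => [|[|n]].
apply: leq_trans (leq_card_setU _ _) _; rewrite leq_add2r.
exact: leq_card_setU.
Qed.

Lemma card_pendant_blocks_le : #|pendant_blocks| <= \sum_(b in P) pendant_weight b.
Proof.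
rewrite /pendant_weight -sum_over_cover.
apply: leq_trans (card_bigcup_le U pendants); apply: subset_leq_card.
apply/subsetP => C; rewrite inE => /andP [CB /cards1P [x CU]].
have xU : x \in U by have := set11 x; rewrite -CU inE => /andP [].
by apply/bigcupP; exists x; rewrite // inE CB CU eqxx.
Qed.

(* With weight 3 on crossing blocks of trace size 2, every crossing block
   accounts for at least 6 weighted ordered pairs of its trace; the extra
   weight is charged to the linked pair. *)
Definition crossing_weight C := if #|C :&: U| == 2 then 3 else 1.
Definition pair_load x y :=
  \sum_(C in crossing_blocks) crossing_weight C * ((x \in C) && (y \in C) && (x != y)).

Lemma crossing_blocks_subset : crossing_blocks \subset B.
Proof. by apply/subsetP => C; rewrite !inE => /andP [/andP [_ ->]]. Qed.

Lemma pair_load_member b x y : b \in P -> x \in b -> y \in b -> pair_load x y = 0.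
Proof.
move=> bP xb yb; rewrite /pair_load big1 // => C Ccr.
case: (boolP ((x \in C) && (y \in C) && (x != y))) => [|_]; last by rewrite muln0.
move=> /andP [/andP [xC yC] xy].
have CB := subsetP crossing_blocks_subset C Ccr.
move: Ccr; rewrite (packing_pair_uniq packB xy CB (subsetP ppc_subset b bP) xC yC xb yb).
by rewrite !inE bP.
Qed.

Lemma pair_load_le x y : x \in U -> y \in U -> pair_load x y <= 1 + 2 * linked x y.
Proof.
move=> xU yU; case: (eqVneq x y) => [-> | xy].
  by rewrite /pair_load big1 // => C _; rewrite eqxx andbF muln0.
case: (pickP [pred C in crossing_blocks | (x \in C) && (y \in C)]); last first.
  move=> none; rewrite /pair_load big1 // => C Ccr.
  by have := none C; rewrite /= Ccr /= => ->; rewrite muln0.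
move=> C0 /andP [C0cr /andP [xC0 yC0]].
have C0B := subsetP crossing_blocks_subset C0 C0cr.
rewrite /pair_load (bigD1 C0) //= big1 ?addn0 => [|C /andP [Ccr CC0]].
  rewrite xC0 yC0 xy muln1 /crossing_weight; case: ifP => [trace2 | _]; last exact: leq_addr.
  suff -> : linked x y by [].
  apply/exists_inP; exists C0 => //.
  rewrite eq_sym eqEcard cards2 xy (eqP trace2) leqnn andbT subUset !sub1set.
  by rewrite -(mem_trace _ xU) -(mem_trace _ yU) xC0 yC0.
case: (boolP ((x \in C) && (y \in C) && (x != y))) => [|_]; last by rewrite muln0.
move=> /andP [/andP [xC yC] _].
have CB := subsetP crossing_blocks_subset C Ccr.
by rewrite (packing_pair_uniq packB xy CB C0B xC yC xC0 yC0) eqxx in CC0.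
Qed.

Lemma crossing_count :
  6 * #|crossing_blocks| <= \sum_(x in U) \sum_(y in U) pair_load x y.
Proof.
apply: (@leq_trans (\sum_(C in crossing_blocks)
                      crossing_weight C * (#|C :&: U| * (#|C :&: U| - 1)))).
  rewrite -sum1_card big_distrr /= leq_sum // => C; rewrite inE => /andP [_].
  rewrite /crossing_weight; case: eqP => [-> // | /eqP ne2 gt1]; rewrite mul1n.
  have gt2 : 2 < #|C :&: U| by rewrite ltn_neqAle eq_sym ne2.
  by rewrite (@leq_mul 3 2) // (leq_subRL _ (ltnW gt1)).
apply: eq_leq; rewrite /pair_load.
under eq_bigr => C _ do rewrite -sum_ordered_pairs big_distrr /=.
under eq_bigr => C _ do under eq_bigr => x _ do rewrite big_distrr /=.
by rewrite exchange_big; apply: eq_bigr => x _; rewrite exchange_big.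
Qed.

Lemma sum_pair_load_le : \sum_(x in U) \sum_(y in U) pair_load x y
  <= \sum_(b in P) \sum_(b' in P | b' != b) (k * k + 2 * links_between b b').
Proof.
rewrite sum_over_cover leq_sum // => b bP.
apply: (@leq_trans
  (\sum_(x in b) \sum_(b' in P | b' != b) \sum_(y in b') (1 + 2 * linked x y))).
  rewrite leq_sum // => x xb; rewrite sum_over_cover (bigD1 b) //= big1 ?add0n => [|y yb].
    rewrite leq_sum // => b' /andP [b'P _]; rewrite leq_sum // => y yb'.
    exact: pair_load_le (mem_cover_ppc bP xb) (mem_cover_ppc b'P yb').
  exact: pair_load_member bP xb yb.
rewrite exchange_big /=; apply: eq_leq; apply: eq_bigr => b' /andP [b'P _].
under eq_bigr => x _ do
  rewrite big_split /= sum_nat_const (ppc_member_card b'P) muln1 -big_distrr /= sum_pred_card.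
by rewrite big_split /= sum_nat_const (ppc_member_card bP) -big_distrr.
Qed.

Lemma card_blocks_count : 6 * #|B| <= 6 * rho + 6 * \sum_(b in P) pendant_weight b
  + \sum_(b in P) \sum_(b' in P | b' != b) (k * k + 2 * links_between b b').
Proof.
have := card_blocks_le; have := card_pendant_blocks_le.
have := leq_trans crossing_count sum_pair_load_le.
lia.
Qed.

End MaximumPPC.

Section Packing4.

Variables (v rho : nat) (B P : {set {set 'I_v}}).
Hypotheses (packB : is_packing 4 B) (ppcP : is_ppc B P) (cardP : #|P| = rho).
Hypothesis maxP : forall Q, is_ppc B Q -> #|Q| <= rho.

(* Each member of P is charged 19 for every ordered pair of members containing
   it, plus 5 unless it is heavy: a member that is not heavy has pendant weight
   at most 12, and v >= 9 rho + 31 leaves room for the extra charge. *)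
Lemma pendant_weight4_le b : 0 < rho -> 9 * rho + 31 <= v -> b \in P ->
  6 * pendant_weight B P b + 10 * (rho - 1) * ~~ heavy 4 B P b <= 2 * #|~: cover P|.
Proof.
move=> rho_gt0 v_ge bP; have := card_outside_cover packB ppcP cardP.
have := pendant_weight_le packB isT ppcP cardP maxP bP.
by case: (heavy 4 B P b) => /=; lia.
Qed.

Lemma links_between4_le b b' : b \in P -> b' \in P -> b != b' ->
  4 * 4 + 2 * links_between B P b b'
    <= (19 + 5 * ~~ heavy 4 B P b) + (19 + 5 * ~~ heavy 4 B P b').
Proof.
move=> bP b'P bb'; have b'b : b' != b by rewrite eq_sym.
case hb: (heavy 4 B P b); case hb': (heavy 4 B P b') => /=.
- by have := links_between_heavy2_le packB isT ppcP cardP maxP bP b'P bb' hb hb'; lia.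
- by have := links_between_heavy_le packB isT ppcP cardP maxP bP b'P bb' hb; lia.
- rewrite links_betweenC.
  by have := links_between_heavy_le packB isT ppcP cardP maxP b'P bP b'b hb'; lia.
- have := links_between_le packB ppcP b b'P.
  by rewrite (ppc_member_card packB ppcP bP); lia.
Qed.

Lemma card_packing4_le : 0 < rho -> 9 * rho + 31 <= v ->
  6 * #|B| + 32 * rho <= 2 * rho * v + 30 * rho ^ 2.
Proof.
move=> rho_gt0 v_ge.
pose light b := (~~ heavy 4 B P b : nat).
have pairs : \sum_(b in P) \sum_(b' in P | b' != b) (4 * 4 + 2 * links_between B P b b')
    <= \sum_(b in P) \sum_(b' in P | b' != b) ((19 + 5 * light b) + (19 + 5 * light b')).
  rewrite leq_sum // => b bP; rewrite leq_sum // => b' /andP [b'P b'b].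
  by rewrite links_between4_le // eq_sym.
have weights : 6 * \sum_(b in P) pendant_weight B P b + 10 * (rho - 1) * \sum_(b in P) light b
    <= #|P| * (2 * #|~: cover P|).
  rewrite !big_distrr -big_split -sum_nat_const; apply: leq_sum => b bP.
  exact: pendant_weight4_le.
have := card_blocks_count packB isT ppcP cardP maxP.
have := card_outside_cover packB ppcP cardP.
move: pairs weights; rewrite sum_offdiag_sym big_split sum_nat_const -big_distrr cardP /=.
nia.
Qed.

End Packing4.

Lemma is_ppc_set0 v (B : {set {set 'I_v}}) : is_ppc B set0.
Proof. by apply/is_ppcP; split=> [|C]; rewrite ?sub0set ?inE. Qed.

Lemma leq_max_ppc_size v (B Q : {set {set 'I_v}}) : is_ppc B Q -> #|Q| <= max_ppc_size B.
Proof. exact: leq_bigmax_cond. Qed.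

Lemma max_ppc_size_attained v (B : {set {set 'I_v}}) :
  exists2 P, is_ppc B P & #|P| = max_ppc_size B.
Proof.
rewrite /max_ppc_size (@bigmax_eq_arg _ set0 _ _ (is_ppc_set0 B)).
by case: arg_maxnP => [|P ppcP _]; [exact: is_ppc_set0 | exists P].
Qed.

Lemma beta4_le rho v : 0 < rho -> 9 * rho + 31 <= v ->
  6 * beta rho v 4 + 32 * rho <= 2 * rho * v + 30 * rho ^ 2.
Proof.
move=> rho_gt0 v_ge; rewrite /beta.
case: (pickP (fun B : {set {set 'I_v}} => is_packing 4 B && (max_ppc_size B == rho)));
  last by move=> none; rewrite big_pred0 //; nia.
move=> B0 B0ok; rewrite (@bigmax_eq_arg _ B0 _ _ B0ok).
case: arg_maxnP => // B /andP [packB /eqP maxB] _.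
have [P ppcP cardP] := max_ppc_size_attained B.
rewrite maxB in cardP; apply: (card_packing4_le packB ppcP cardP) => // Q.
by rewrite -maxB; apply: leq_max_ppc_size.
Qed.

Unset Implicit Arguments.
Import GRing.Theory Num.Theory.
Local Open Scope ring_scope.

Theorem theorem3p12 (rho v : nat) :
  (0 < rho)%N -> (9 * rho + 31 <= v)%N ->
  ((beta rho v 4)%:R : rat)
    <= (rho%:R * v%:R) / 3%:R + 5%:R * rho%:R ^+ 2 - 16%:R * rho%:R / 3%:R.
Proof.
move=> rho_gt0 v_ge; have := beta4_le rho_gt0 v_ge.
rewrite -(ler_nat rat) !natrD natrX !natrM.
move: (beta rho v 4)%:R (rho%:R : rat) (v%:R : rat) => b r w.
lra.
Qed.
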